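(* Let $\widehat{F}_3$ be the rainbow triangle (a $3$-coloring of $K_3$ whose three edges have three different colors). Then: (a) For every $\delta>0$ there exists $n_0$ such that every graph $G$ of order $n>n_0$ satisfies $c_{3,\widehat{F}_3}(G)\le 2^{(1+\delta)n^2/2}$. (b) For every $\xi>0$ there exists $n_1$ such that if $G$ is a graph of order $n>n_1$ with $c_{3,\widehat{F}_3}(G)\ge 2^{\binom{n}{2}}$, then $|E(G)|\ge\binom{n}{2}-\xi n^2$.
   Context: A $3$-coloring of a graph assigns one of three colors to each edge (not necessarily properly). $c_{3,\widehat{F}_3}(G)$ denotes the number of $3$-colorings of the edges of $G$ containing no triangle whose three edges have three distinct colors. *)

From mathcomp Require Import all_boot.
From Stdlib Require Import Reals.
Set Implicit Arguments. Unset Strict Implicit. Unset Printing Implicit Defensive.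

Definition simple_graph (n : nat) (g : rel 'I_n) : Prop :=
  irreflexive g /\ symmetric g.

(* Edges of g, each unordered edge {i,j} represented once as (i,j) with i < j. *)
Definition is_edge (n : nat) (g : rel 'I_n) (p : 'I_n * 'I_n) : bool :=
  (p.1 < p.2) && g p.1 p.2.

Definition edge_t (n : nat) (g : rel 'I_n) : finType :=
  {p : 'I_n * 'I_n | is_edge g p}.

Definition num_edges (n : nat) (g : rel 'I_n) : nat := #|edge_t g|.

Definition coloring (n : nat) (g : rel 'I_n) : finType := {ffun edge_t g -> 'I_3}.

Definition col (n : nat) (g : rel 'I_n) (c : coloring g) (i j : 'I_n) : option 'I_3 :=
  match insub (i, j) with
  | Some x => Some (c x)
  | None => None
  end.

Definition has_rainbow_triangle (n : nat) (g : rel 'I_n) (c : coloring g) : bool :=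
  [exists i : 'I_n, exists j : 'I_n, exists k : 'I_n,
    [&& i < j, j < k, g i j, g j k, g i k &
     match col c i j, col c j k, col c i k with
     | Some a, Some b, Some d => [&& a != b, b != d & a != d]
     | _, _, _ => false
     end]].

Definition c3_rainbow_free (n : nat) (g : rel 'I_n) : nat :=
  #|[set c : coloring g | ~~ has_rainbow_triangle c]|.

From mathcomp Require Import all_boot.
From Stdlib Require Import Reals Lia Lra.
From mathcomp Require Import zify.
Set Implicit Arguments. Unset Strict Implicit. Unset Printing Implicit Defensive.

(* Count rainbow-free colourings vertex by vertex.  Once the edges inside
   [S :\ v] are coloured, a colouring of the edges at [v] is a vertex colouring
   [f] of the neighbourhood [N] of [v] such that no edge [uw] inside [N] makes
   [(f u, f w, c uw)] rainbow.  On a clique of size [k] there are fewer than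
   [2^(k+1)] such [f]: deleting a vertex [x], [f x] has at most two admissible
   values unless the remaining values all copy [c x _], which happens for one
   restriction only.  Covering [N] greedily by maximal cliques, and choosing
   [v] of maximal non-degree [m], at most [m + 1] cliques are needed, which
   gives [c(G) <= 2^C(n+1,2)] and part (a).
   For part (b) every vertex is given weight [rho] and every edge weight
   [rho^L], with [rho^L >= 1 - 2^-(L+1)]; the same induction then bounds
   [c(G) rho^(C(n,2) + L e(G))] by [2^C(n+1,2) rho^(L C(n+1,2))], so that each
   missing edge costs a factor about [1 - 2^-(L+1)] while all vertices together
   gain only about [exp(n^2 / (L 2^(L+2)))]; with [2^C(n,2)] colourings this
   allows at most about [n^2 / L] missing edges. *)

Definition rainbow (a b c : 'I_3) := [&& a != b, b != c & a != c].

Lemma rainbowC12 a b c : rainbow a b c = rainbow b a c.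
Proof. by move: a b c; do 3!case=> [[|[|[|?]]] ?]. Qed.

Lemma rainbowC23 a b c : rainbow a b c = rainbow a c b.
Proof. by move: a b c; do 3!case=> [[|[|[|?]]] ?]. Qed.

Lemma norainbow_eq a b c : b != c -> ~~ rainbow a b c -> (a == b) || (a == c).
Proof. by move: a b c; do 3!case=> [[|[|[|?]]] ?]. Qed.

Lemma ord3_eq_nonmax (a b : 'I_3) :
  a != ord_max -> b != ord_max -> (a == ord0) = (b == ord0) -> a = b.
Proof. by move: a b; do 2!case=> [[|[|[|?]]] ?] //; move=> *; apply/val_inj. Qed.

Lemma INR_leq a b : a <= b -> (INR a <= INR b)%R.
Proof. by move/leP; apply: le_INR. Qed.

Section Weights.
Open Scope R_scope.
Variables (rho : R) (L : nat).
Hypotheses (rho_gt0 : 0 < rho) (rho_le1 : rho <= 1).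
Hypothesis rhoL_ge : 1 - / 2 ^ (L + 1) <= rho ^ L.

Lemma rho_pow_le1 k : rho ^ k <= 1.
Proof. rewrite -(pow1 k); apply: pow_incr; lra. Qed.

Lemma rho_pow_leq p q : (p <= q)%nat -> rho ^ q <= rho ^ p.
Proof.
move=> le_pq; rewrite -(subnKC le_pq) -plusE pow_add.
have := rho_pow_le1 (q - p); have := pow_lt rho p rho_gt0; nra.
Qed.

Lemma two_rhoL_ge1 m : 1 <= 2 ^ m * rho ^ (L * m).
Proof.
rewrite -multE pow_mult -Rpow_mult_distr; apply: pow_R1_Rle.
have : / 2 ^ (L + 1) <= / 2.
  apply: Rinv_le_contravar; first lra.
  by rewrite -{1}(pow_1 2); apply: Rle_pow; lra || lia.
lra.
Qed.

(* [2^(a+1) - 1] bounds the link colourings of a clique with [a] vertices. *)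
Lemma clique_weight a : (2 ^ (a + 1) - 1) * rho ^ a <= 2 ^ (a + 1) * rho ^ L.
Proof.
have rho_a := pow_lt rho a rho_gt0.
have two_a : 0 < 2 ^ (a + 1) by apply: pow_lt; lra.
case: (leqP a L) => aL; last first.
  have : rho ^ a <= rho ^ L by apply: rho_pow_leq; lia.
  nra.
have -> : rho ^ L = rho ^ a * rho ^ (L - a) by rewrite -pow_add plusE subnKC.
have two_L : 0 < 2 ^ (L + 1) by apply: pow_lt; lra.
have le_aL : 2 ^ (a + 1) * / 2 ^ (L + 1) <= 1.
  apply: (Rmult_le_reg_r (2 ^ (L + 1))) => //.
  rewrite Rmult_assoc Rinv_l; last lra.
  by rewrite Rmult_1_r Rmult_1_l; apply: Rle_pow; lra || lia.
have : 2 ^ (a + 1) - 1 <= 2 ^ (a + 1) * rho ^ (L - a).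
  have rhoL_le : rho ^ L <= rho ^ (L - a) by apply: rho_pow_leq; lia.
  have : 2 ^ (a + 1) * (1 - / 2 ^ (L + 1)) <= 2 ^ (a + 1) * rho ^ (L - a).
    by apply: Rmult_le_compat_l; lra.
  lra.
nra.
Qed.

Lemma INR_pow2 k : INR (2 ^ k) = 2 ^ k.
Proof. by rewrite pow_INR; congr (_ ^ _); rewrite /=; lra. Qed.

Lemma clique_split_weight (F F1 F2 a r m : nat) :
  (F <= F1 * F2)%nat -> (F1 < 2 ^ a.+1)%nat ->
  INR F2 * rho ^ r <= 2 ^ (r + m) * rho ^ (L * m) ->
  INR F * rho ^ (a + r) <= 2 ^ (a + r + m.+1) * rho ^ (L * m.+1).
Proof.
move=> le_F lt_F1 le_F2.
have F_le : INR F <= INR F1 * INR F2 by rewrite -mult_INR; apply: INR_leq.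
have F1_le : INR F1 * rho ^ a <= 2 ^ (a + 1) * rho ^ L.
  apply: Rle_trans (clique_weight a); apply: Rmult_le_compat_r.
    by apply: pow_le; lra.
  by have := INR_leq lt_F1; rewrite S_INR INR_pow2 addn1; lra.
have -> : 2 ^ (a + r + m.+1) = 2 ^ (a + 1) * 2 ^ (r + m).
  by rewrite -pow_add; congr (_ ^ _); lia.
have -> : (L * m.+1 = L + L * m)%nat by lia.
rewrite (pow_add rho a r) (pow_add rho L (L * m)).
have := pos_INR F; have := pos_INR F1; have := pos_INR F2.
have := pow_lt rho a rho_gt0; have := pow_lt rho r rho_gt0.
have := pow_lt rho L rho_gt0; have := pow_lt rho (L * m) rho_gt0.
move=> *; apply: Rle_trans (_ : (INR F1 * rho ^ a) * (INR F2 * rho ^ r) <= _).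
  have := Rmult_le_compat_r (rho ^ a * rho ^ r) _ _ ltac:(nra) F_le; lra.
have -> : 2 ^ (a + 1) * 2 ^ (r + m) * (rho ^ L * rho ^ (L * m)) =
          (2 ^ (a + 1) * rho ^ L) * (2 ^ (r + m) * rho ^ (L * m)) by ring.
by apply: Rmult_le_compat; nra.
Qed.

Lemma vertex_split_weight (F F1 F2 p q d m e : nat) :
  (F <= F1 * F2)%nat ->
  INR F1 * rho ^ (p + L * e) <= 2 ^ q * rho ^ (L * q) ->
  INR F2 * rho ^ d <= 2 ^ (d + m.+1) * rho ^ (L * m.+1) ->
  INR F * rho ^ (p + d + m + L * (e + d)) <=
    2 ^ (q + d + m.+1) * rho ^ (L * (q + d + m.+1)).
Proof.
move=> le_F le_F1 le_F2.
have F_le : INR F <= INR F1 * INR F2 by rewrite -mult_INR; apply: INR_leq.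
have -> : (p + d + m + L * (e + d) = (p + L * e) + d + L * d + m)%nat by lia.
have -> : (L * (q + d + m.+1) = L * q + L * m.+1 + L * d)%nat by lia.
have -> : 2 ^ (q + d + m.+1) = 2 ^ q * 2 ^ (d + m.+1).
  by rewrite -pow_add; congr (_ ^ _); lia.
rewrite (pow_add rho _ m) !(pow_add rho _ (L * d)) (pow_add rho _ d) (pow_add rho (L * q)).
have := rho_pow_le1 m; have := pow_lt rho m rho_gt0.
have := pos_INR F; have := pos_INR F1; have := pos_INR F2.
have := pow_lt rho (p + L * e) rho_gt0; have := pow_lt rho d rho_gt0.
have := pow_lt rho (L * d) rho_gt0.
move=> *.
apply: Rle_trans (_ : (INR F1 * rho ^ (p + L * e)) * (INR F2 * rho ^ d) * rho ^ (L * d) <= _).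
  have Fm_le : INR F * rho ^ m <= INR F1 * INR F2 by nra.
  set W := rho ^ (p + L * e) * rho ^ d * rho ^ (L * d).
  have W_gt0 : 0 < W by rewrite /W; do 2?apply: Rmult_lt_0_compat.
  have := Rmult_le_compat_r W _ _ (Rlt_le _ _ W_gt0) Fm_le.
  by rewrite /W; lra.
have -> : 2 ^ q * 2 ^ (d + m.+1) * (rho ^ (L * q) * rho ^ (L * m.+1) * rho ^ (L * d)) =
          (2 ^ q * rho ^ (L * q)) * (2 ^ (d + m.+1) * rho ^ (L * m.+1)) * rho ^ (L * d).
  by ring.
by apply: Rmult_le_compat_r; [lra | apply: Rmult_le_compat; nra].
Qed.

End Weights.

Section Graph.
Variables (n : nat) (g : rel 'I_n).
Hypotheses (girr : irreflexive g) (gsym : symmetric g).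
Local Notation T := 'I_n.

(* [f u] is the colour of the edge from a new vertex to [u]; [c] colours the
   edges inside [N]. *)
Definition link_colorings (c : T -> T -> 'I_3) (N : {set T}) : {set {ffun T -> 'I_3}} :=
  [set f : {ffun T -> 'I_3} | [forall u, (u \notin N) ==> (f u == ord0)] &&
    [forall u, forall w, [&& u \in N, w \in N & g u w] ==> ~~ rainbow (f u) (f w) (c u w)]].

Lemma link_coloringsP c (N : {set T}) (f : {ffun T -> 'I_3}) :
  reflect ((forall u, u \notin N -> f u = ord0) /\
           (forall u w, u \in N -> w \in N -> g u w -> ~~ rainbow (f u) (f w) (c u w)))
          (f \in link_colorings c N).
Proof.
rewrite inE; apply: (iffP andP) => [[/forallP H1 /forallP H2]|[H1 H2]]; split.
- by move=> u Nu; apply/eqP; move/implyP: (H1 u); apply.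
- by move=> u w Nu Nw guw; move/forallP: (H2 u) => /(_ w) /implyP; apply; rewrite Nu Nw guw.
- by apply/forallP => u; apply/implyP => Nu; rewrite H1.
- by apply/forallP => u; apply/forallP => w; apply/implyP => /and3P [*]; apply: H2.
Qed.

Definition ffun_restr (A : {set T}) (f : {ffun T -> 'I_3}) : {ffun T -> 'I_3} :=
  [ffun u => if u \in A then f u else ord0].

Lemma ffun_restr_link c (N A : {set T}) f :
  A \subset N -> f \in link_colorings c N -> ffun_restr A f \in link_colorings c A.
Proof.
move=> sAN /link_coloringsP [f0 frb]; apply/link_coloringsP.
split=> [u Au|u w Au Aw guw]; rewrite !ffunE ?(negbTE Au) // Au Aw.
by apply: frb => //; apply: (subsetP sAN).
Qed.

Lemma card_link_colorings_split c (N A : {set T}) : A \subset N ->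
  #|link_colorings c N| <= #|link_colorings c A| * #|link_colorings c (N :\: A)|.
Proof.
move=> sAN.
have inj : {in link_colorings c N &, injective
                (fun f => (ffun_restr A f, ffun_restr (N :\: A) f))}.
  move=> f1 f2 /link_coloringsP [f1_0 _] /link_coloringsP [f2_0 _] [E1 E2].
  apply/ffunP => u; case: (boolP (u \in A)) => Au.
    by move/ffunP: E1 => /(_ u); rewrite !ffunE Au.
  case: (boolP (u \in N)) => Nu; last by rewrite f1_0 ?f2_0.
  by move/ffunP: E2 => /(_ u); rewrite !ffunE !inE Au Nu.
rewrite -cardsX -(card_in_imset inj); apply: subset_leq_card.
apply/subsetP => _ /imsetP [f Nf ->]; rewrite inE /=.
by rewrite !(ffun_restr_link _ Nf) // subDset subsetUr.
Qed.

Lemma card_link_colorings0 c : #|link_colorings c set0| <= 1.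
Proof.
have sub : link_colorings c set0 \subset [set [ffun => ord0 : 'I_3]].
  apply/subsetP => f /link_coloringsP [f0 _].
  by rewrite inE; apply/eqP/ffunP => u; rewrite ffunE f0 ?inE.
by rewrite (leq_trans (subset_leq_card sub)) // cards1.
Qed.

Definition clique (K : {set T}) := forall x y, x \in K -> y \in K -> x != y -> g x y.

Section CliqueStep.
Variables (c : T -> T -> 'I_3) (K : {set T}) (x : T).
Hypotheses (Kx : x \in K) (clK : clique K).

(* If some [u] of [K :\ x] has [f u != c x u], then [f x] is [f u] or [c x u]
   because the triangle [x u] is not rainbow, so one bit describes [f x].
   Otherwise [f x] is arbitrary, and is described by [None] or one bit. *)
Definition link_code (f : {ffun T -> 'I_3}) : option ({ffun T -> 'I_3} * bool) :=
  let f' := ffun_restr (K :\ x) f in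
  if [pick u in K :\ x | f' u != c x u] is Some u then Some (f', f x == f' u)
  else if f x == ord_max then None else Some (f', f x == ord0).

Lemma link_colorings_restrE f : f \in link_colorings c K ->
  f = [ffun u => if u == x then f x else ffun_restr (K :\ x) f u].
Proof.
move=> /link_coloringsP [f0 _]; apply/ffunP => u; rewrite !ffunE.
case: (u =P x) => [-> //|/eqP ux]; rewrite !inE ux /=.
by case: (boolP (u \in K)) => // Ku; rewrite f0.
Qed.

Lemma link_code_restr f :
  if link_code f is Some p then p.1 = ffun_restr (K :\ x) f
  else ffun_restr (K :\ x) f = [ffun u => if u \in K :\ x then c x u else ord0].
Proof.
rewrite /link_code /=; case: pickP => [//|f'c]; case: (_ == ord_max) => //.
apply/ffunP => u; rewrite !ffunE; case: ifP => // Ku.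
by move/negbT: (f'c u); rewrite /= ffunE Ku negbK => /eqP.
Qed.

Lemma link_code_inj : {in link_colorings c K &, injective link_code}.
Proof.
move=> f1 f2 Lf1 Lf2 E.
have E' : ffun_restr (K :\ x) f1 = ffun_restr (K :\ x) f2.
  have := link_code_restr f1; have := link_code_restr f2.
  by rewrite E; case: link_code => [p|] -> ->.
rewrite (link_colorings_restrE Lf1) (link_colorings_restrE Lf2) -E'.
move: E; rewrite /link_code /= -E'; set f' := ffun_restr _ f1.
case: pickP => [u /andP [K'u f'u] [Eb]|_].
  have xu : x != u by move: K'u; rewrite !inE eq_sym => /andP [].
  have Ku : u \in K by move: K'u; rewrite inE => /andP [].
  have two_choices f : f \in link_colorings c K -> ffun_restr (K :\ x) f = f' ->
      (f x == f' u) || (f x == c x u).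
    move=> /link_coloringsP [_ frb] Ef; apply: norainbow_eq => //.
    by rewrite -Ef ffunE K'u; apply: frb => //; apply: clK.
  move: (two_choices f1 Lf1 erefl) (two_choices f2 Lf2 (esym E')) Eb.
  case: (f1 x =P f' u) => [->|_]; case: (f2 x =P f' u) => [->|_] //=.
  by move=> /eqP -> /eqP ->.
case: (f1 x =P ord_max) => [->|/eqP f1x]; case: (f2 x =P ord_max) => [->|/eqP f2x] //=.
by move=> [Eb]; rewrite (ord3_eq_nonmax f1x f2x Eb).
Qed.

Lemma card_link_colorings_delete :
  #|link_colorings c K| <= (#|link_colorings c (K :\ x)|).*2.+1.
Proof.
set Codes := [set Some p | p in setX (link_colorings c (K :\ x)) [set: bool]].
have sub : link_code @: link_colorings c K \subset Codes :|: [set None].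
  apply/subsetP => _ /imsetP [f Lf ->].
  set f' := ffun_restr (K :\ x) f.
  have Lf' : f' \in link_colorings c (K :\ x) by apply: ffun_restr_link Lf; apply: subD1set.
  have Codes_f b : Some (f', b) \in Codes :|: [set None].
    by rewrite inE; apply/orP; left; apply/imsetP; exists (f', b); rewrite // in_setX Lf' in_setT.
  rewrite /link_code /= -/f'; case: pickP => [u _|_]; last case: (_ == ord_max).
  - exact: Codes_f.
  - by rewrite !inE eqxx orbT.
  - exact: Codes_f.
have card_Codes : #|Codes| = (#|link_colorings c (K :\ x)|).*2.
  by rewrite card_imset; [rewrite cardsX cardsT card_bool muln2 | move=> p q []].
rewrite -(card_in_imset link_code_inj); apply: leq_trans (subset_leq_card sub) _.
by rewrite (leq_trans (leq_card_setU _ _)) // card_Codes cards1 addn1.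
Qed.

End CliqueStep.

Lemma card_link_colorings_clique c (K : {set T}) :
  clique K -> #|link_colorings c K| < 2 ^ #|K|.+1.
Proof.
move: {2}#|K| (erefl #|K|) => k; elim: k K => [|k IHk] K cardK clK.
  move/eqP: cardK; rewrite cards_eq0 => /eqP ->.
  by rewrite cards0; apply: leq_ltn_trans (card_link_colorings0 c) _.
have [x Kx] : exists x, x \in K by apply/card_gt0P; rewrite cardK.
have cardK' : #|K :\ x| = k by move: cardK; rewrite (cardsD1 x K) Kx add1n => -[].
have clK' : clique (K :\ x).
  by move=> u w; rewrite !inE => /andP [_ Ku] /andP [_ Kw]; apply: clK.
have := IHk _ cardK' clK'; have := card_link_colorings_delete c Kx clK.
rewrite cardK cardK' (Nat.pow_succ_r' 2 k.+1) -!muln2; move: (2 ^ k.+1) #|_| #|_| => p a b; lia.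
Qed.

Definition nondeg (S : {set T}) v := #|[set w in S | (w != v) && ~~ g v w]|.

Lemma exists_maximal_clique (N : {set T}) x : x \in N -> exists K : {set T},
  [/\ K \subset N, clique K & {in N :\: K, forall u, exists2 w, w \in K & ~~ g u w}].
Proof.
move=> Nx.
pose P (K : {set T}) := (K \subset N) && [forall y in K, forall z in K, (y != z) ==> g y z].
have P1 : P [set x].
  rewrite /P sub1set Nx /=; apply/forall_inP => y; rewrite inE => /eqP ->.
  by apply/forall_inP => z; rewrite inE => /eqP ->; rewrite eqxx.
have [K /andP [sKN /forall_inP clK] Kmax] := @arg_maxnP _ [set x] P (fun K => #|K|) P1.
have clK' : clique K.
  by move=> y z Ky Kz yz; move/forall_inP: (clK y Ky) => /(_ z Kz) /implyP; apply.
exists K; split => //.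
move=> u; rewrite inE => /andP [Ku Nu].
case: (boolP [exists w in K, ~~ g u w]) => [/exists_inP [w Kw guw]|]; first by exists w.
rewrite negb_exists_in => /forall_inP gu; exfalso.
have {}gu w : w \in K -> g u w by move=> Kw; move: (gu w Kw); rewrite negbK.
have PuK : P (u |: K).
  rewrite /P subUset sub1set Nu sKN /=; apply/forall_inP => y; rewrite !inE => /orP [/eqP ->|Ky];
    apply/forall_inP => z; rewrite !inE => /orP [/eqP ->|Kz]; apply/implyP => yz.
  - by rewrite eqxx in yz.
  - exact: gu.
  - by rewrite gsym; apply: gu.
  - exact: clK'.
by have := Kmax _ PuK; rewrite cardsU1 Ku /=; lia.
Qed.

Lemma nondeg_diff_maximal_clique (N K : {set T}) u : K \subset N ->
  {in N :\: K, forall u, exists2 w, w \in K & ~~ g u w} ->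
  u \in N :\: K -> nondeg (N :\: K) u < nondeg N u.
Proof.
move=> sKN Kmax uNK; have [w Kw guw] := Kmax u uNK.
move: uNK; rewrite inE => /andP [Ku Nu].
apply: proper_card; apply/properP; split.
  by apply/subsetP => y; rewrite !inE => /andP [/andP [_ ->] ->].
exists w; last by rewrite !inE Kw.
rewrite inE (subsetP sKN w Kw) guw andbT /=.
by apply: contraNneq Ku => <-.
Qed.

Definition nbhd (S : {set T}) v := [set w in S | g v w].

(* Edge colourings of [S] are stored on the pairs [(x, y)] with [x < y]. *)
Definition edge_in (S : {set T}) (p : T * T) :=
  [&& p.1 < p.2, g p.1 p.2, p.1 \in S & p.2 \in S].

Definition pcol (h : {ffun T * T -> 'I_3}) (x y : T) :=
  if x < y then h (x, y) else h (y, x).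

Definition rf_colorings (S : {set T}) : {set {ffun T * T -> 'I_3}} :=
  [set h : {ffun T * T -> 'I_3} | [forall p, ~~ edge_in S p ==> (h p == ord0)] &&
    [forall x, forall y, forall z, [&& x \in S, y \in S, z \in S, g x y, g y z & g x z] ==>
       ~~ rainbow (pcol h x y) (pcol h y z) (pcol h x z)]].

Lemma rf_coloringsP (S : {set T}) (h : {ffun T * T -> 'I_3}) :
  reflect ((forall p, ~~ edge_in S p -> h p = ord0) /\
    (forall x y z, x \in S -> y \in S -> z \in S -> g x y -> g y z -> g x z ->
       ~~ rainbow (pcol h x y) (pcol h y z) (pcol h x z)))
    (h \in rf_colorings S).
Proof.
rewrite inE; apply: (iffP andP) => [[/forallP H1 /forallP H2]|[H1 H2]]; split.
- by move=> p Sp; apply/eqP; move/implyP: (H1 p); apply.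
- move=> x y z Sx Sy Sz gxy gyz gxz.
  move/forallP: (H2 x) => /(_ y) /forallP /(_ z) /implyP; apply.
  by rewrite Sx Sy Sz gxy gyz gxz.
- by apply/forallP => p; apply/implyP => Sp; rewrite H1.
- apply/forallP => x; apply/forallP => y; apply/forallP => z; apply/implyP.
  by move=> /and3P [? ? /and4P [? ? ? ?]]; apply: H2.
Qed.

Definition pair_restr (S : {set T}) (h : {ffun T * T -> 'I_3}) : {ffun T * T -> 'I_3} :=
  [ffun p => if edge_in S p then h p else ord0].

Lemma pcol_restr (S : {set T}) h u w :
  u \in S -> w \in S -> g u w -> pcol (pair_restr S h) u w = pcol h u w.
Proof.
move=> Su Sw guw; rewrite /pcol !ffunE /edge_in /=.
have gwu : g w u by rewrite gsym.
case: (ltngtP u w) => uw; rewrite /= ?Su ?Sw ?guw ?gwu //.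
by move: guw; rewrite (val_inj uw) girr.
Qed.

Lemma pair_restr_rf (S : {set T}) v h :
  h \in rf_colorings S -> pair_restr (S :\ v) h \in rf_colorings (S :\ v).
Proof.
have sub x : x \in S :\ v -> x \in S by rewrite !inE => /andP [].
move=> /rf_coloringsP [h0 hrb]; apply/rf_coloringsP; split.
  by move=> p Sp; rewrite ffunE (negbTE Sp).
move=> x y z Sx Sy Sz gxy gyz gxz; rewrite !pcol_restr //.
by apply: hrb => //; apply: sub.
Qed.

Definition link_of (S : {set T}) v (h : {ffun T * T -> 'I_3}) : {ffun T -> 'I_3} :=
  [ffun u => if u \in nbhd S v then pcol h v u else ord0].

Lemma link_of_link_colorings (S : {set T}) v h : v \in S -> h \in rf_colorings S ->
  link_of S v h \in link_colorings (pcol (pair_restr (S :\ v) h)) (nbhd S v).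
Proof.
move=> Sv /rf_coloringsP [_ hrb]; apply/link_coloringsP; split.
  by move=> u Nu; rewrite ffunE (negbTE Nu).
move=> u w Nu Nw guw; rewrite !ffunE Nu Nw.
move: Nu Nw; rewrite !inE => /andP [Su gvu] /andP [Sw gvw].
have uv : u != v by apply: contraTneq gvu => ->; rewrite girr.
have wv : w != v by apply: contraTneq gvw => ->; rewrite girr.
by rewrite pcol_restr ?inE ?uv ?wv ?Su ?Sw // rainbowC23; apply: hrb.
Qed.

Lemma rf_colorings_inj (S : {set T}) v h1 h2 : v \in S ->
  h1 \in rf_colorings S -> h2 \in rf_colorings S ->
  pair_restr (S :\ v) h1 = pair_restr (S :\ v) h2 -> link_of S v h1 = link_of S v h2 ->
  h1 = h2.
Proof.
move=> Sv /rf_coloringsP [h1_0 _] /rf_coloringsP [h2_0 _] Er El; apply/ffunP => -[a b].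
case: (boolP (edge_in S (a, b))) => Sab; last by rewrite h1_0 ?h2_0.
move: (Sab); rewrite /edge_in /= => /and4P [ab gab Sa Sb].
case: (a =P v) => [Ea|/eqP av].
  by subst a; move/ffunP: El => /(_ b); rewrite !ffunE inE Sb gab /pcol ab.
case: (b =P v) => [Eb|/eqP bv].
  subst b.
  by move/ffunP: El => /(_ a); rewrite !ffunE inE Sa (gsym v a) gab /pcol ltnNge (ltnW ab).
by move/ffunP: Er => /(_ (a, b)); rewrite !ffunE /edge_in /= !inE ab gab Sa Sb av bv.
Qed.

Lemma card_rf_colorings_delete (S : {set T}) v : v \in S ->
  #|rf_colorings S| <= \sum_(h' in rf_colorings (S :\ v))
                          #|link_colorings (pcol h') (nbhd S v)|.
Proof.
move=> Sv; rewrite -sum1_card.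
rewrite (partition_big (pair_restr (S :\ v)) (mem (rf_colorings (S :\ v)))) /=; last first.
  by move=> h /pair_restr_rf.
apply: leq_sum => h' _; rewrite sum1dep_card.
set A := [set h | _].
have memA h : (h \in A) = (h \in rf_colorings S) && (pair_restr (S :\ v) h == h').
  by rewrite in_set.
have inj : {in A &, injective (link_of S v)}.
  move=> h1 h2; rewrite !memA => /andP [C1 /eqP E1] /andP [C2 /eqP E2] El.
  by apply: (rf_colorings_inj Sv C1 C2) => //; rewrite E1 E2.
rewrite -(card_in_imset inj); apply/subset_leq_card/subsetP => _ /imsetP [h Ah ->].
by move: Ah; rewrite memA => /andP [C /eqP <-]; apply: link_of_link_colorings.
Qed.

Lemma card_nbhd_nondeg (S : {set T}) v : v \in S -> #|S| = (#|nbhd S v| + nondeg S v).+1.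
Proof.
move=> Sv; rewrite (cardsD1 v S) Sv add1n; congr _.+1.
rewrite -(cardsID [set w | g v w] (S :\ v)); congr addn; apply: eq_card => w; rewrite !inE.
  by case: (w =P v) => [->|_]; rewrite /= ?girr ?andbF.
by case: (w \in S); case: (w != v); case: (g v w).
Qed.

Definition edges_in (S : {set T}) := #|[set p | edge_in S p]|.

Lemma edges_in_delete (S : {set T}) v : v \in S ->
  edges_in S = edges_in (S :\ v) + #|nbhd S v|.
Proof.
move=> Sv; rewrite /edges_in.
rewrite -(cardsID [set p : T * T | (p.1 == v) || (p.2 == v)] [set p | edge_in S p]) addnC.
congr addn.
  apply: eq_card => -[a b]; rewrite !inE /edge_in /= !inE.
  by case: (a == v); case: (b == v); rewrite ?andbF.
pose other (p : T * T) := if p.1 == v then p.2 else p.1.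
pose edge (w : T) := if v < w then (v, w) else (w, v).
have edgeK : {in nbhd S v, cancel edge other}.
  move=> w; rewrite inE => /andP [_ gvw].
  have wv : w != v by apply: contraTneq gvw => ->; rewrite girr.
  by rewrite /edge /other; case: (v < w); rewrite /= ?eqxx // (negbTE wv).
rewrite -(card_in_imset (can_in_inj edgeK)); apply: eq_card => -[a b].
rewrite !inE /edge_in /=; apply/idP/imsetP.
  move=> /andP [/and4P [ab gab Sa Sb] /orP [/eqP Ea|/eqP Eb]].
    by exists b; rewrite ?inE ?Sb -?Ea ?gab // /edge -Ea ab.
  exists a; first by rewrite inE Sa -Eb gsym gab.
  by rewrite /edge -Eb ltnNge (ltnW ab).
move=> [w]; rewrite inE => /andP [Sw gvw]; rewrite /edge.
have wv : w != v by apply: contraTneq gvw => ->; rewrite girr.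
case: (ltngtP v w) => vw [-> ->] /=; rewrite ?vw ?gvw ?Sv ?Sw ?eqxx ?orbT //.
- by rewrite gsym gvw.
- by move: wv; rewrite (val_inj vw) eqxx.
Qed.

Lemma card_rf_colorings0 : #|rf_colorings set0| <= 1.
Proof.
have sub : rf_colorings set0 \subset [set [ffun => ord0 : 'I_3]].
  apply/subsetP => h /rf_coloringsP [h0 _].
  by rewrite inE; apply/eqP/ffunP => p; rewrite ffunE h0 // /edge_in !inE !andbF.
by rewrite (leq_trans (subset_leq_card sub)) // cards1.
Qed.

Section Weighted.
Open Scope R_scope.
Variables (rho : R) (L : nat).
Hypotheses (rho_gt0 : 0 < rho) (rho_le1 : rho <= 1).
Hypothesis rhoL_ge : 1 - / 2 ^ (L + 1) <= rho ^ L.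

(* Covering [N] greedily by maximal cliques, each clique lowers the maximal
   non-degree of what remains, so fewer than [m] cliques are needed. *)
Lemma link_colorings_weight c m (N : {set T}) : {in N, forall u, (nondeg N u < m)%nat} ->
  INR #|link_colorings c N| * rho ^ #|N| <= 2 ^ (#|N| + m) * rho ^ (L * m).
Proof.
have empty_weight m' :
    INR #|link_colorings c set0| * rho ^ #|@set0 T| <= 2 ^ (#|@set0 T| + m') * rho ^ (L * m').
  rewrite cards0 add0n /= Rmult_1_r.
  apply: Rle_trans (INR_leq (card_link_colorings0 c)) (two_rhoL_ge1 rhoL_ge m').
elim: m N => [|m IHm] N ndN; case: (set_0Vmem N) => [->|[x Nx]];
  try exact: empty_weight.
  by have := ndN x Nx.
have [K [sKN clK Kmax]] := exists_maximal_clique Nx.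
have ndR : {in N :\: K, forall u, (nondeg (N :\: K) u < m)%nat}.
  move=> u Ru; have := nondeg_diff_maximal_clique sKN Kmax Ru.
  by have := ndN u (subsetP (subsetDl N K) u Ru); lia.
have -> : #|N| = (#|K| + #|N :\: K|)%nat by rewrite -(cardsID K N) (setIidPr sKN).
exact: (clique_split_weight rho_gt0 rho_le1 rhoL_ge (card_link_colorings_split c sKN)
          (card_link_colorings_clique c clK) (IHm _ ndR)).
Qed.

Lemma rf_colorings_weight s (S : {set T}) : #|S| = s ->
  INR #|rf_colorings S| * rho ^ ('C(s, 2) + L * edges_in S) <=
    2 ^ 'C(s.+1, 2) * rho ^ (L * 'C(s.+1, 2)).
Proof.
elim: s S => [|s IHs] S cardS.
  move/eqP: cardS; rewrite cards_eq0 => /eqP ->.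
  have -> : edges_in set0 = 0%nat.
    by apply/eqP; rewrite cards_eq0; apply/eqP/setP => p; rewrite !inE /edge_in !inE !andbF.
  by rewrite !bin_small // muln0 /= !Rmult_1_r; apply: INR_leq card_rf_colorings0.
have [v0 Sv0] : exists v, v \in S by apply/card_gt0P; rewrite cardS.
have [v Sv vmax] := @arg_maxnP _ v0 (fun v => v \in S) (nondeg S) Sv0.
set N := nbhd S v; set m := nondeg S v.
have cardSv : #|S :\ v| = s by move: cardS; rewrite (cardsD1 v S) Sv add1n => -[].
have ndN : {in N, forall u, (nondeg N u < m.+1)%nat}.
  move=> u; rewrite inE => /andP [Su _]; rewrite ltnS; apply: leq_trans (vmax u Su).
  by apply/subset_leq_card/subsetP => w; rewrite !inE => /andP [/andP [-> _] ->].
set M := \max_(h' in rf_colorings (S :\ v)) #|link_colorings (pcol h') N|.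
have M_weight : INR M * rho ^ #|N| <= 2 ^ (#|N| + m.+1) * rho ^ (L * m.+1).
  rewrite /M; elim/big_ind: _ => [| x y | h' _].
  - by rewrite /= Rmult_0_l; apply: Rmult_le_pos; apply: pow_le; lra.
  - by case: (leqP x y).
  - exact: link_colorings_weight.
have card_le : (#|rf_colorings S| <= #|rf_colorings (S :\ v)| * M)%nat.
  apply: leq_trans (card_rf_colorings_delete Sv) _; rewrite -sum_nat_const.
  by apply: leq_sum => h' Sh'; apply: (leq_bigmax_cond h').
have := vertex_split_weight rho_gt0 rho_le1 card_le (IHs _ cardSv) M_weight.
have s_split : s = (#|N| + m)%nat by move: cardS; rewrite (card_nbhd_nondeg Sv) => -[].
have -> : 'C(s.+2, 2) = ('C(s.+1, 2) + #|N| + m.+1)%nat by rewrite binS bin1; lia.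
have -> : 'C(s.+1, 2) = ('C(s, 2) + #|N| + m)%nat by rewrite binS bin1; lia.
by rewrite (edges_in_delete Sv).
Qed.

End Weighted.

Lemma rainbow_free_sorted (h : {ffun T * T -> 'I_3}) :
  (forall i j k : T, i < j -> j < k -> g i j -> g j k -> g i k ->
     ~~ rainbow (h (i, j)) (h (j, k)) (h (i, k))) ->
  forall x y z, g x y -> g y z -> g x z -> ~~ rainbow (pcol h x y) (pcol h y z) (pcol h x z).
Proof.
move=> hrb x y z gxy gyz gxz.
have gyx : g y x by rewrite gsym.
have gzy : g z y by rewrite gsym.
have gzx : g z x by rewrite gsym.
rewrite /pcol.
case: (ltngtP x y) => xy; [| |by move: gxy; rewrite (val_inj xy) girr];
case: (ltngtP y z) => yz; try (by move: gyz; rewrite (val_inj yz) girr);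
case: (ltngtP x z) => xz; try (by move: gxz; rewrite (val_inj xz) girr);
try (exfalso; lia);
first [ by apply: hrb
      | by rewrite rainbowC12; apply: hrb
      | by rewrite rainbowC23; apply: hrb
      | by rewrite rainbowC12 rainbowC23; apply: hrb
      | by rewrite rainbowC23 rainbowC12; apply: hrb
      | by rewrite rainbowC12 rainbowC23 rainbowC12; apply: hrb ].
Qed.

Definition pair_coloring (c : coloring g) : {ffun T * T -> 'I_3} :=
  [ffun p => if (insub p : option (edge_t g)) is Some x then c x else ord0].

Lemma col_pair_coloring (c : coloring g) (i j : T) :
  is_edge g (i, j) -> col c i j = Some (pair_coloring c (i, j)).
Proof. by move=> ij; rewrite /col ffunE (insubT _ ij). Qed.

Lemma c3_rainbow_free_le_rf : c3_rainbow_free g <= #|rf_colorings setT|.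
Proof.
have inj : injective pair_coloring.
  by move=> c1 c2 E; apply/ffunP => x; move/ffunP: E => /(_ (val x)); rewrite !ffunE valK.
rewrite /c3_rainbow_free -(card_imset _ inj); apply/subset_leq_card/subsetP.
move=> _ /imsetP [c Hc ->].
move: Hc; rewrite inE => /negP c_rf; apply/rf_coloringsP; split.
  move=> p Sp; rewrite ffunE insubN //.
  by move: Sp; rewrite /edge_in /is_edge !inE !andbT.
move=> x y z _ _ _; apply: rainbow_free_sorted => i j k ij jk gij gjk gik.
have eij : is_edge g (i, j) by rewrite /is_edge /= ij gij.
have ejk : is_edge g (j, k) by rewrite /is_edge /= jk gjk.
have eik : is_edge g (i, k) by rewrite /is_edge /= (ltn_trans ij jk) gik.
apply/negP => rb; apply: c_rf; apply/existsP; exists i; apply/existsP; exists j.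
apply/existsP; exists k.
by rewrite ij jk gij gjk gik !col_pair_coloring.
Qed.

Lemma edges_in_setT : edges_in setT = num_edges g.
Proof.
rewrite /num_edges /edge_t card_sig /edges_in; apply: eq_card => p.
by rewrite !inE /edge_in !inE !andbT.
Qed.

Lemma c3_rainbow_free_weight (rho : R) (L : nat) : (0 < rho)%R -> (rho <= 1)%R ->
  (1 - / 2 ^ (L + 1) <= rho ^ L)%R ->
  (INR (c3_rainbow_free g) * rho ^ ('C(n, 2) + L * num_edges g) <=
     2 ^ 'C(n.+1, 2) * rho ^ (L * 'C(n.+1, 2)))%R.
Proof.
move=> rho_gt0 rho_le1 rhoL_ge; rewrite -edges_in_setT.
have cardT : #|[set: T]| = n by rewrite cardsT card_ord.
apply: Rle_trans (rf_colorings_weight rho_gt0 rho_le1 rhoL_ge cardT).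
apply: Rmult_le_compat_r; first by apply: pow_le; lra.
exact: INR_leq c3_rainbow_free_le_rf.
Qed.

End Graph.

Lemma c3_rainbow_free_le n (g : rel 'I_n) : simple_graph g ->
  (INR (c3_rainbow_free g) <= 2 ^ 'C(n.+1, 2))%R.
Proof.
case=> girr gsym; have rhoL_ge : (1 - / 2 ^ (0 + 1) <= 1 ^ 0)%R by rewrite /=; lra.
have := c3_rainbow_free_weight girr gsym Rlt_0_1 (Rle_refl 1) rhoL_ge.
by rewrite !pow1 !Rmult_1_r.
Qed.

Lemma bin2S_mul2 k : ('C(k.+1, 2) * 2 = k.+1 * k)%nat.
Proof. by elim: k => [|k IHk] //; rewrite binS bin1 mulnDl IHk; lia. Qed.

Lemma bin2S_le (delta : R) k : (1 <= delta * INR k)%R ->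
  (INR 'C(k.+1, 2) <= (1 + delta) * INR k ^ 2 / 2)%R.
Proof.
move=> le1; have := f_equal INR (bin2S_mul2 k).
rewrite -!multE !mult_INR !S_INR INR_0 => E.
have := pos_INR k; nra.
Qed.

Lemma bernoulli_le (x : R) k : (0 <= x <= 1)%R -> (1 - INR k * x <= (1 - x) ^ k)%R.
Proof.
move=> x01; elim: k => [|k IHk]; first by rewrite /=; lra.
rewrite S_INR /=.
have := Rmult_le_compat_l (1 - x) _ _ ltac:(lra) IHk.
have : (0 <= INR k * x * x)%R by have := pos_INR k; nra.
nra.
Qed.

Lemma exists_rho L : (0 < L)%nat ->
  exists2 rho : R, (0 < rho < 1)%R & (1 - / 2 ^ (L + 1) <= rho ^ L)%R.
Proof.
move=> L_gt0; have L_ge1 : (1 <= INR L)%R by apply: (le_INR 1); apply/leP.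
have two_ge2 : (2 <= 2 ^ (L + 1))%R.
  by rewrite -{1}(pow_1 2); apply: Rle_pow; lra || lia.
set x := (/ (INR L * 2 ^ (L + 1)))%R.
have x_gt0 : (0 < x)%R by apply/Rinv_0_lt_compat; nra.
have x_lt1 : (x < 1)%R by rewrite /x -Rinv_1; apply: Rinv_lt_contravar; nra.
exists (1 - x)%R; first lra.
have -> : (/ 2 ^ (L + 1) = INR L * x)%R.
  by rewrite /x Rinv_mult -Rmult_assoc Rinv_r ?Rmult_1_l //; lra.
by apply: bernoulli_le; lra.
Qed.

Lemma weight_drop (rho : R) (h n a p q : nat) : (0 < rho <= 1)%R -> (2 * rho ^ h < 1)%R ->
  (0 < n)%nat -> (p + h * n <= q)%nat -> (2 ^ (a + n) * rho ^ q < 2 ^ a * rho ^ p)%R.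
Proof.
move=> rho01 rhoh n_gt0 le_q.
have rhoh_gt0 := pow_lt rho h ltac:(lra).
have [_ drop] := pow_lt_1_compat (2 * rho ^ h) n ltac:(lra) (ltP n_gt0).
have le_rhoq : (rho ^ q <= rho ^ p * (rho ^ h) ^ n)%R.
  by rewrite -pow_mult -pow_add; apply: rho_pow_leq; lra || exact: le_q.
have -> : (2 ^ a * rho ^ p = 2 ^ a * rho ^ p * 1)%R by ring.
have pos : (0 < 2 ^ a * rho ^ p)%R by apply: Rmult_lt_0_compat; apply: pow_lt; lra.
apply: Rle_lt_trans (_ : _ <= 2 ^ a * rho ^ p * (2 * rho ^ h) ^ n)%R _; last first.
  by apply: Rmult_lt_compat_l.
rewrite pow_add Rpow_mult_distr.
have := pow_lt 2 a ltac:(lra); have := pow_lt 2 n ltac:(lra).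
have := pow_lt (rho ^ h) n rhoh_gt0; have := pow_lt rho p ltac:(lra).
move=> *; have := Rmult_le_compat_l (2 ^ a * 2 ^ n) _ _ ltac:(nra) le_rhoq.
lra.
Qed.

Lemma c3_rainbow_free_le_Rpower (delta : R) : (0 < delta)%R ->
  exists n0 : nat, forall (n : nat) (g : rel 'I_n), simple_graph g -> (n0 < n)%nat ->
    (INR (c3_rainbow_free g) <= Rpower 2 ((1 + delta) * INR n ^ 2 / 2))%R.
Proof.
move=> delta_gt0; have [N N_gt] := INR_unbounded (/ delta).
exists N => n g sg /ltP /lt_INR ltNn.
apply: Rle_trans (c3_rainbow_free_le sg) _.
rewrite -Rpower_pow; last lra.
apply: Rle_Rpower; first lra.
apply: bin2S_le.
have n_gt : (/ delta < INR n)%R by lra.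
have := Rmult_lt_compat_l delta _ _ delta_gt0 n_gt.
by rewrite Rinv_r; [lra | apply: Rgt_not_eq].
Qed.

Lemma num_edges_ge_of_c3_rainbow_free (xi : R) : (0 < xi)%R ->
  exists n1 : nat, forall (n : nat) (g : rel 'I_n), simple_graph g -> (n1 < n)%nat ->
    (2 ^ 'C(n, 2) <= c3_rainbow_free g)%nat ->
    (INR 'C(n, 2) - xi * INR n ^ 2 <= INR (num_edges g))%R.
Proof.
move=> xi_gt0; have [L L_gt] := INR_unbounded (/ xi).
have xi_inv := Rinv_0_lt_compat _ xi_gt0.
have L_gt0 : (0 < L)%nat by apply/ltP/INR_lt; rewrite /=; lra.
have Lxi : (1 < INR L * xi)%R.
  by have := Rmult_lt_compat_r xi _ _ xi_gt0 L_gt; rewrite Rinv_l; lra.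
have [rho rho01 rhoL_ge] := exists_rho L_gt0.
have [h rhoh] : exists h, (2 * rho ^ h < 1)%R.
  have [h Hh] := pow_lt_1_zero rho ltac:(rewrite Rabs_right; lra) (/ 2) ltac:(lra).
  exists h; have := Hh h (le_n _).
  by rewrite Rabs_right; [lra | apply/Rle_ge/pow_le; lra].
exists (2 * h)%nat => n g [girr gsym] lt_n c3_ge; apply: Rnot_lt_le => few_edges.
set C := 'C(n, 2) in c3_ge few_edges *; set e := num_edges g in few_edges *.
have missing : (n * n + L * e < L * C)%nat.
  apply/ltP/INR_lt; rewrite -!plusE -!multE plus_INR !mult_INR.
  have := Rmult_lt_compat_l (INR L) _ _ ltac:(lra) few_edges.
  have := pos_INR n; nra.
have C2 : (C * 2 <= n * n)%nat by rewrite /C; case: (n) => [//|k]; rewrite bin2S_mul2; nia.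
have hn : (h * n * 2 <= n * n)%nat by nia.
have gap : (C + L * e + h * n <= L * (C + n))%nat.
  move: missing C2 hn; rewrite mulnDr.
  by move: (n * n) (L * e) (L * C) (h * n) (L * n) => *; lia.
have := c3_rainbow_free_weight girr gsym (proj1 rho01) (Rlt_le _ _ (proj2 rho01)) rhoL_ge.
have -> : 'C(n.+1, 2) = (C + n)%nat by rewrite binS bin1.
rewrite -/C -/e.
have := weight_drop (rho := rho) (n := n) C ltac:(lra) rhoh ltac:(lia) gap.
have := INR_leq c3_ge; rewrite INR_pow2.
have := pow_lt rho (C + L * e) (proj1 rho01).
move=> rho_pos c3R drop weight.
have := Rmult_le_compat_r _ _ _ (Rlt_le _ _ rho_pos) c3R; lra.
Qed.

Theorem theorem4p4 :
  (forall delta : R, (0 < delta)%R ->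
     exists n0 : nat, forall (n : nat) (g : rel 'I_n),
       simple_graph g -> (n0 < n)%nat ->
       (INR (c3_rainbow_free g) <=
          Rpower 2 ((1 + delta) * INR n ^ 2 / 2))%R)
  /\
  (forall xi : R, (0 < xi)%R ->
     exists n1 : nat, forall (n : nat) (g : rel 'I_n),
       simple_graph g -> (n1 < n)%nat ->
       (2 ^ 'C(n, 2) <= c3_rainbow_free g)%nat ->
       (INR 'C(n, 2) - xi * INR n ^ 2 <= INR (num_edges g))%R).
Proof.
split; [exact: c3_rainbow_free_le_Rpower | exact: num_edges_ge_of_c3_rainbow_free].
Qed.
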